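(* For all integers $m,n\geq 5$ with $m\neq 6$, $m\neq 8$ and $n\neq 7$, $\chi_i(C_m\Box C_n)\leq 6$.
   Context: For a graph $G$, an incidence is a pair $(v,e)$ with $v\in V(G)$, $e\in E(G)$ and $v$ incident with $e$. Two incidences $(v,e)$ and $(w,f)$ are adjacent if $v=w$, or $e=f$, or the edge $vw$ equals $e$ or $f$. An incidence $k$-coloring of $G$ is a map from the set of incidences of $G$ to a set of $k$ colors such that adjacent incidences receive distinct colors; the incidence chromatic number $\chi_i(G)$ is the least such $k$. $C_n$ denotes the cycle on $n$ vertices and $\Box$ the Cartesian product of graphs: $G\Box H$ has vertex set $V(G)\times V(H)$, with $(u_1,v_1)$ adjacent to $(u_2,v_2)$ iff either $u_1=u_2$ and $v_1v_2\in E(H)$, or $v_1=v_2$ and $u_1u_2\in E(G)$. *)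

From mathcomp Require Import all_boot.
Set Implicit Arguments. Unset Strict Implicit. Unset Printing Implicit Defensive.

(* A simple graph is given by a vertex finType T and an adjacency relation
   adj (assumed symmetric and irreflexive for the graphs we use). *)

Definition edges (T : finType) (adj : rel T) : {set {set T}} :=
  [set E : {set T} | [exists x : T, exists y : T, adj x y && (E == [set x; y])]].

Definition is_incidence (T : finType) (adj : rel T) (p : T * {set T}) : bool :=
  (p.2 \in edges adj) && (p.1 \in p.2).

Definition inc_adjacent (T : finType) (p q : T * {set T}) : bool :=
  [|| p.1 == q.1, p.2 == q.2, [set p.1; q.1] == p.2 | [set p.1; q.1] == q.2].

Definition inc_colorable (T : finType) (adj : rel T) (k : nat) : bool :=
  [exists f : {ffun T * {set T} -> 'I_k},
    [forall p, forall q,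
      [&& is_incidence adj p, is_incidence adj q, p != q & inc_adjacent p q]
        ==> (f p != f q)]].

(* Incidence chromatic number: least k admitting an incidence k-coloring
   (searching k = 0 .. N where N = #|T * {set T}|, for which a coloring
   always exists, e.g. an injective one). *)
Definition inc_chi (T : finType) (adj : rel T) : nat :=
  find (inc_colorable adj) (iota 0 (#|{: T * {set T}}|).+1).

Definition cycle_adj (n : nat) : rel 'I_n :=
  fun i j => (val j == i.+1 %% n) || (val i == j.+1 %% n).

Definition cart_adj (U V : finType) (a : rel U) (b : rel V) : rel (U * V) :=
  fun x y => ((x.1 == y.1) && b x.2 y.2) || ((x.2 == y.2) && a x.1 y.1).

From mathcomp Require Import all_boot zify.
Set Implicit Arguments. Unset Strict Implicit. Unset Printing Implicit Defensive.

(* An incidence coloring of the torus C_m □ C_n only has to give distinct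
   colors to the four incidences at each vertex v and make the color of
   (v, vw) avoid every color used at w.  The incidences at a vertex are
   colored by a tile chosen by a column type a < 6 and a row type b < 7; the
   42 tiles are checked by computation to fit together whenever the column
   types follow the transitions 0->1->2->3->4->0 and 0->5->0, and the row
   types the transitions 0->1->2->3->4->0 and 0->5->6->0.  Gluing these
   closed walks gives cyclic column sequences of every length 5a + 2b, i.e.
   every m >= 4, and cyclic row sequences of every length 5a + 3b, i.e.
   every n >= 5 except 7. *)

Lemma cycle_nth (T : eqType) (r : rel T) x0 (s : seq T) i :
  cycle r s -> i < size s -> r (nth x0 s i) (nth x0 s (i.+1 %% size s)).
Proof.
case: s => [//|x s] /= /(pathP x0) r_s lt_i_s.
have := r_s i; rewrite size_rcons -rcons_cons nth_rcons /= lt_i_s => /(_ isT).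
rewrite nth_rcons; have [lt_i_s' | le_s_i] := ltnP i (size s).
  by rewrite modn_small.
have -> : i = size s by lia.
by rewrite eqxx modnn.
Qed.

Lemma cycle_cat_loops (T : eqType) (r : rel T) x s t :
  cycle r (x :: s) -> cycle r (x :: t) -> cycle r (x :: s ++ x :: t).
Proof.
rewrite /= rcons_cat !rcons_path cat_path /= => /andP[-> ->].
by rewrite rcons_path.
Qed.

Definition glue_loops (T : Type) (x : T) (cs : seq (seq T)) : seq T :=
  flatten [seq x :: c | c <- cs].

Lemma cycle_glue_loops (T : eqType) (r : rel T) x cs :
  all (fun c => cycle r (x :: c)) cs -> cycle r (glue_loops x cs).
Proof.
case: cs => [//|c cs] /= /andP[]; elim: cs c => [|c' cs IHcs] c r_c /=.
  by rewrite cats0.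
by case/andP=> r_c' r_cs; exact: (cycle_cat_loops r_c (IHcs _ r_c' r_cs)).
Qed.

Lemma size_glue_loops (T : Type) (x : T) cs :
  size (glue_loops x cs) = sumn [seq (size c).+1 | c <- cs].
Proof. by rewrite size_flatten /shape -map_comp. Qed.

Lemma cycle_of_loop_lengths (T : eqType) (r : rel T) x s t a b :
  cycle r (x :: s) -> cycle r (x :: t) ->
  exists2 w, size w = a * (size s).+1 + b * (size t).+1 & cycle r w.
Proof.
move=> r_s r_t; exists (glue_loops x (nseq a s ++ nseq b t)).
  by rewrite size_glue_loops map_cat !map_nseq sumn_cat !sumn_nseq mulnC [b * _]mulnC.
by rewrite cycle_glue_loops // all_cat !all_nseq r_s r_t !orbT.
Qed.

Lemma sum_of_fives_and_twos m : 4 <= m -> exists a b, m = a * 5 + b * 2.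
Proof. by move=> le4m; exists (m %% 2), ((m - 5 * (m %% 2)) %/ 2); lia. Qed.

Lemma sum_of_fives_and_threes n : 5 <= n -> n != 7 -> exists a b, n = a * 5 + b * 3.
Proof. by move=> le5n ne7n; exists ((2 * n) %% 3), ((n - 5 * ((2 * n) %% 3)) %/ 3); lia. Qed.

Lemma inc_chi_le (T : finType) (adj : rel T) k :
  k <= #|{: T * {set T}}| -> inc_colorable adj k -> inc_chi adj <= k.
Proof.
move=> le_k_N col_k; rewrite /inc_chi leqNgt; apply/negP => lt_k_chi.
by have := before_find 0 lt_k_chi; rewrite nth_iota // add0n col_k.
Qed.

Section Torus.
Variables m n : nat.
Local Notation V := ('I_m * 'I_n)%type.
Local Notation adj := (cart_adj (@cycle_adj m) (@cycle_adj n)).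

Definition step (v : V) (d : 'I_4) : V :=
  match val d with
  | 0 => (ordS v.1, v.2)
  | 1 => (ord_pred v.1, v.2)
  | 2 => (v.1, ordS v.2)
  | _ => (v.1, ord_pred v.2)
  end.

Lemma cycle_adjE k (i j : 'I_k) : cycle_adj i j -> j = ordS i \/ j = ord_pred i.
Proof.
case/orP => /eqP j_eq; [left | right]; first exact: val_inj.
by rewrite -[j]ordSK; congr ord_pred; apply: val_inj.
Qed.

Lemma cycle_adj_sym k : symmetric (@cycle_adj k).
Proof. by move=> i j; rewrite /cycle_adj orbC. Qed.

Lemma torus_adj_sym : symmetric adj.
Proof.
move=> v w; rewrite /cart_adj !(cycle_adj_sym v.1, cycle_adj_sym v.2).
by rewrite !(eq_sym v.1, eq_sym v.2).
Qed.

Lemma torus_adj_step v w : adj v w -> exists d, w = step v d.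
Proof.
case: v w => [v1 v2] [w1 w2]; rewrite /cart_adj /=.
case/orP => /andP[/eqP <- /cycle_adjE[] ->].
- by exists (@Ordinal 4 2 isT).
- by exists (@Ordinal 4 3 isT).
- by exists (@Ordinal 4 0 isT).
- by exists (@Ordinal 4 1 isT).
Qed.

Definition dir_of (p : V * {set V}) : 'I_4 :=
  odflt ord0 [pick d | p.2 == [set p.1; step p.1 d]].

Lemma incidence_dir p : is_incidence adj p -> p.2 = [set p.1; step p.1 (dir_of p)].
Proof.
case: p => v E /andP[] /=; rewrite inE => /existsP[x] /existsP[y] /andP[adj_xy /eqP ->] v_xy.
have [w adj_vw xy_vw] : exists2 w, adj v w & [set x; y] = [set v; w].
  move: v_xy; rewrite !inE => /orP[] /eqP ->; first by exists y.
  by exists x; [rewrite torus_adj_sym | rewrite setUC].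
have [d w_step] := torus_adj_step adj_vw.
rewrite /dir_of /=; case: pickP => [d' /eqP //| no_dir].
by have := no_dir d; rewrite xy_vw w_step eqxx.
Qed.

Lemma torus_inc_colorable k (c : V -> 'I_4 -> 'I_k) :
  (forall v, injective (c v)) -> (forall v d e, c v d != c (step v d) e) ->
  inc_colorable adj k.
Proof.
move=> c_inj c_step.
apply/existsP; exists [ffun p => c p.1 (dir_of p)].
apply/forallP => -[v E]; apply/forallP => -[x F]; apply/implyP.
case/and4P => /incidence_dir /= E_eq /incidence_dir /= F_eq neq_pq.
rewrite !ffunE; set d := dir_of _ in E_eq neq_pq *; set e := dir_of _ in F_eq neq_pq *.
have in_pair (a b b' : V) : a != b -> a \in [set b; b'] -> a = b'.
  by move=> ne_ab; rewrite !inE (negbTE ne_ab) => /eqP.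
have [eq_vx | ne_vx] := eqVneq v x.
  move=> _ /=; subst x.
  by apply: contra neq_pq => /eqP/c_inj de; rewrite E_eq F_eq de.
have ne_xv : x != v by rewrite eq_sym.
rewrite /inc_adjacent /= (negbTE ne_vx) /=; case/or3P => /eqP EF.
- by rewrite (in_pair x v (step v d)) // -E_eq EF F_eq !inE eqxx.
- by rewrite (in_pair x v (step v d)) // -E_eq -EF !inE eqxx orbT.
- by rewrite eq_sym (in_pair v x (step x e)) // -F_eq -EF !inE eqxx.
Qed.

End Torus.

Definition tiles : seq (seq (seq nat)) :=
[:: [:: [:: 2; 0; 4; 1]; [:: 0; 1; 2; 3]; [:: 1; 3; 0; 5]; [:: 5; 2; 3; 4]; [:: 2; 4; 5; 0]; [:: 5; 1; 0; 3]; [:: 3; 4; 5; 2]];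
    [:: [:: 5; 3; 1; 4]; [:: 3; 5; 4; 2]; [:: 5; 2; 3; 0]; [:: 0; 1; 2; 4]; [:: 5; 1; 0; 3]; [:: 4; 2; 3; 0]; [:: 0; 1; 2; 5]];
    [:: [:: 2; 0; 4; 3]; [:: 2; 0; 1; 5]; [:: 2; 4; 0; 3]; [:: 2; 3; 5; 1]; [:: 0; 2; 1; 4]; [:: 0; 1; 3; 5]; [:: 1; 4; 5; 2]];
    [:: [:: 3; 5; 0; 1]; [:: 1; 3; 5; 4]; [:: 3; 1; 4; 0]; [:: 3; 0; 1; 5]; [:: 5; 3; 4; 2]; [:: 3; 2; 1; 4]; [:: 2; 3; 4; 0]];
    [:: [:: 5; 2; 1; 4]; [:: 4; 2; 0; 3]; [:: 4; 5; 2; 1]; [:: 1; 4; 5; 0]; [:: 1; 0; 3; 2]; [:: 4; 5; 2; 0]; [:: 0; 5; 3; 1]];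
    [:: [:: 3; 5; 1; 4]; [:: 4; 5; 3; 2]; [:: 4; 2; 5; 0]; [:: 0; 1; 4; 3]; [:: 1; 3; 0; 5]; [:: 4; 2; 3; 0]; [:: 0; 1; 2; 5]]].

(* [tile a b] lists the colors of the four incidences at a vertex of type
   (a, b), in the order of the directions of [step]. *)
Definition tile (a b : nat) : seq nat := nth [::] (nth [::] tiles a) b.

Definition proper_tile (s : seq nat) : bool :=
  [&& uniq s, size s == 4 & all (fun c => c < 6) s].

Lemma tiles_proper a b : a < 6 -> b < 7 -> proper_tile (tile a b).
Proof.
move=> lt_a lt_b.
have /allP/(_ a) : all (fun a => all (fun b => proper_tile (tile a b)) (iota 0 7)) (iota 0 6).
  by [].
by rewrite mem_iota lt_a => /(_ isT)/allP/(_ b); rewrite mem_iota lt_b; apply.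
Qed.

Definition x_compatible : rel nat := fun a a' =>
  (a < 6) && all (fun b => (nth 0 (tile a b) 0 \notin tile a' b)
                        && (nth 0 (tile a' b) 1 \notin tile a b)) (iota 0 7).

Definition y_compatible : rel nat := fun b b' =>
  (b < 7) && all (fun a => (nth 0 (tile a b) 2 \notin tile a b')
                        && (nth 0 (tile a b') 3 \notin tile a b)) (iota 0 6).

Lemma x_compatible_cycle m : 4 <= m -> exists2 w, size w = m & cycle x_compatible w.
Proof.
case/sum_of_fives_and_twos => a [b ->].
exact: (@cycle_of_loop_lengths _ _ 0 [:: 1; 2; 3; 4] [:: 5]).
Qed.

Lemma y_compatible_cycle n : 5 <= n -> n != 7 -> exists2 w, size w = n & cycle y_compatible w.
Proof.
move=> le5n ne7n; have [a [b ->]] := sum_of_fives_and_threes le5n ne7n.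
exact: (@cycle_of_loop_lengths _ _ 0 [:: 1; 2; 3; 4] [:: 5; 6]).
Qed.

Section TiledTorus.
Variables (m n : nat) (wx wy : seq nat).
Hypotheses (size_wx : size wx = m) (size_wy : size wy = n).
Hypotheses (cycle_wx : cycle x_compatible wx) (cycle_wy : cycle y_compatible wy).

Let x_next (i : 'I_m) : x_compatible (nth 0 wx i) (nth 0 wx (ordS i)).
Proof. by have := cycle_nth 0 (i := i) cycle_wx; rewrite size_wx; apply. Qed.

Let y_next (j : 'I_n) : y_compatible (nth 0 wy j) (nth 0 wy (ordS j)).
Proof. by have := cycle_nth 0 (i := j) cycle_wy; rewrite size_wy; apply. Qed.

Let tile_at (v : 'I_m * 'I_n) : seq nat := tile (nth 0 wx v.1) (nth 0 wy v.2).

Let proper_tile_at v : proper_tile (tile_at v).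
Proof. by apply: tiles_proper; [case/andP: (x_next v.1) | case/andP: (y_next v.2)]. Qed.

Let x_notin i j :
  (nth 0 (tile_at (i, j)) 0 \notin tile_at (ordS i, j))
  && (nth 0 (tile_at (ordS i, j)) 1 \notin tile_at (i, j)).
Proof. by case/andP: (x_next i) => _ /allP; apply; rewrite mem_iota; case/andP: (y_next j). Qed.

Let y_notin i j :
  (nth 0 (tile_at (i, j)) 2 \notin tile_at (i, ordS j))
  && (nth 0 (tile_at (i, ordS j)) 3 \notin tile_at (i, j)).
Proof. by case/andP: (y_next j) => _ /allP; apply; rewrite mem_iota; case/andP: (x_next i). Qed.

Let color v (d : 'I_4) : 'I_6 := inord (nth 0 (tile_at v) d).

Let colorE v d : color v d = nth 0 (tile_at v) d :> nat.
Proof.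
case/and3P: (proper_tile_at v) => _ /eqP size4 /allP lt6.
by rewrite inordK // ltnS -ltnS lt6 // mem_nth // size4.
Qed.

Let color_neq v w (d e : 'I_4) :
  nth 0 (tile_at v) d \notin tile_at w -> color v d != color w e.
Proof.
move=> notin; apply: contra notin => /eqP/(congr1 (@nat_of_ord 6)); rewrite !colorE => ->.
by case/and3P: (proper_tile_at w) => _ /eqP size4 _; rewrite mem_nth // size4.
Qed.

Lemma tiled_torus_inc_colorable : inc_colorable (cart_adj (@cycle_adj m) (@cycle_adj n)) 6.
Proof.
apply: (@torus_inc_colorable _ _ _ color) => [v d e /(congr1 (@nat_of_ord 6)) | [i j] d e].
  rewrite !colorE; case/and3P: (proper_tile_at v) => uniq_v /eqP size4 _.
  by move/eqP; rewrite nth_uniq ?size4 // => /eqP/val_inj.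
case: d => -[|[|[|[|//]]]] ?; apply: color_neq.
- by case/andP: (x_notin i j).
- by case/andP: (x_notin (ord_pred i) j); rewrite ord_predK.
- by case/andP: (y_notin i j).
- by case/andP: (y_notin i (ord_pred j)); rewrite ord_predK.
Qed.

End TiledTorus.

Theorem lemma3 (m n : nat) :
  5 <= m -> 5 <= n -> m != 6 -> m != 8 -> n != 7 ->
  inc_chi (cart_adj (@cycle_adj m) (@cycle_adj n)) <= 6.
Proof.
move=> le5m le5n _ _ ne7n.
have [wx size_wx cycle_wx] := x_compatible_cycle (ltnW le5m).
have [wy size_wy cycle_wy] := y_compatible_cycle le5n ne7n.
apply: inc_chi_le; last exact: tiled_torus_inc_colorable size_wx size_wy cycle_wx cycle_wy.
rewrite !card_prod !card_ord.
have sets_gt0 : 0 < #|{: {set 'I_m * 'I_n}}| by apply/card_gt0P; exists set0.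
by apply: leq_trans (leq_pmulr _ sets_gt0); nia.
Qed.
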